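(* Let $G$ be a graph with a linear order $<$ on $V(G)$ satisfying the X-property, and let $s<t$ be vertices with $d^*:=\operatorname{dist}(s,t)<\infty$. Then there is a shortest $s$-$t$ path $P=p_0,p_1,\dots,p_{d^*}$ (with $p_0=s$, $p_{d^*}=t$) such that (i) $p_i\in\{\alpha_s(i),\beta_s(i)\}$ for all $i<\operatorname{righti}(P)$, and (ii) $p_i\in\{\alpha_t(d^*-i),\beta_t(d^*-i)\}$ for all $i>\operatorname{lefti}(P)$.
   Context: The X-property: for all vertices $p<q<r<s$, if $\{p,r\}\in E(G)$ and $\{q,s\}\in E(G)$ then $\{p,s\}\in E(G)$. $\operatorname{dist}$ is the number of edges of a shortest path. $\operatorname{lefti}(P)$ / $\operatorname{righti}(P)$ is the index of the leftmost / rightmost vertex of $P$ w.r.t. $<$. For an integer $k\ge 0$: $\alpha_s(k)$ (resp. $\beta_s(k)$) is the leftmost (resp. rightmost) vertex reachable from $s$ by a path of length at most $k$ using only vertices $v\le t$; $\alpha_t(k)$ (resp. $\beta_t(k)$) is the rightmost (resp. leftmost) vertex reachable from $t$ by a path of length at most $k$ using only vertices $v\ge s$. *)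

From mathcomp Require Import all_boot all_order.
Set Implicit Arguments. Unset Strict Implicit. Unset Printing Implicit Defensive.
Import Order.TTheory.
Local Open Scope order_scope.

Definition simple_graph (T : Type) (e : rel T) : Prop :=
  irreflexive e /\ symmetric e.

Definition X_property (d : Order.disp_t) (T : orderType d) (e : rel T) : Prop :=
  forall p q r s : T, p < q -> q < r -> r < s -> e p r -> e q s -> e p s.

(* A walk from x is encoded as x :: q with path e x q; its length is size q,
   its end vertex is last x q. *)

Definition is_dist (T : eqType) (e : rel T) (x y : T) (d : nat) : Prop :=
  (exists q : seq T, [/\ path e x q, last x q = y & size q = d]) /\
  (forall q : seq T, path e x q -> last x q = y -> d <= size q)%N.

Definition reach_in (T : eqType) (e : rel T) (P : pred T) (x : T) (k : nat)
  (v : T) : Prop :=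
  exists q : seq T, [/\ path e x q, last x q = v, (size q <= k)%N & all P (x :: q)].

Section Extremal.
Context (d : Order.disp_t) (T : orderType d) (e : rel T) (s t : T).

Definition is_alpha_s (k : nat) (v : T) : Prop :=
  reach_in e (fun w => w <= t) s k v /\
  forall w, reach_in e (fun w => w <= t) s k w -> v <= w.
Definition is_beta_s (k : nat) (v : T) : Prop :=
  reach_in e (fun w => w <= t) s k v /\
  forall w, reach_in e (fun w => w <= t) s k w -> w <= v.
Definition is_alpha_t (k : nat) (v : T) : Prop :=
  reach_in e (fun w => s <= w) t k v /\
  forall w, reach_in e (fun w => s <= w) t k w -> w <= v.
Definition is_beta_t (k : nat) (v : T) : Prop :=
  reach_in e (fun w => s <= w) t k v /\
  forall w, reach_in e (fun w => s <= w) t k w -> v <= w.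
End Extremal.

Definition righti (d : Order.disp_t) (T : orderType d) (x : T) (q : seq T) : nat :=
  index (foldr Order.max x q) (x :: q).
Definition lefti (d : Order.disp_t) (T : orderType d) (x : T) (q : seq T) : nat :=
  index (foldr Order.min x q) (x :: q).

From mathcomp Require Import all_boot all_order zify.
From Stdlib Require Import Classical.
Set Implicit Arguments. Unset Strict Implicit. Unset Printing Implicit Defensive.
Import Order.TTheory.

(* The X-property yields a crossing principle: if a walk passes
   from below x to above x without visiting x, then every neighbour of x lying beyond the
   whole walk is adjacent to a vertex of the walk.  Applied to walks from s to alpha_s(k)
   and beta_s(k), it shows that a vertex at distance > k from s which is adjacent to the
   hull [alpha_s(k), beta_s(k)] from outside is adjacent to one of its two ends.  Hence a
   shortest path leaves the hull for good after step k, and a vertex just outside the hull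
   is reached by a walk whose i-th vertex is alpha_s(i) or beta_s(i).  On a shortest path
   with its leftmost vertex at index L and its rightmost at index R, the vertices before R
   stay below t, those strictly between L and R are automatically beta_s, and the part
   before the first of the two extreme vertices can be rerouted through extremal vertices
   without changing L and R.  The t-side is the same statement for the reversed path in
   the dual order. *)

Lemma nat_ivt (h : nat -> bool) m n :
  m <= n -> h m -> ~~ h n -> exists i, [/\ m <= i, i < n, h i & ~~ h i.+1].
Proof.
elim: n => [|n IH] le_mn hm hn.
  by move: le_mn hm; rewrite leqn0 => /eqP->; rewrite (negbTE hn).
have le_mn' : m <= n by move: le_mn; rewrite leq_eqVlt => /predU1P[mn | //]; rewrite -mn hm in hn.
case hn' : (h n); first by exists n; rewrite hn' hn.
by have [i [le_mi lt_in hi hi1]] := IH le_mn' hm (negbT hn'); exists i; split=> //; apply: ltnW.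
Qed.

Section Walks.
Variables (T : Type) (e : rel T).

Definition walk (g : nat -> T) n := forall i, i < n -> e (g i) (g i.+1).

Definition walk_between (x y : T) n (f : nat -> T) := [/\ f 0 = x, f n = y & walk f n].

Lemma walkW g n m : m <= n -> walk g n -> walk g m.
Proof. by move=> le_mn Wg i lt_im; apply: Wg (leq_trans lt_im le_mn). Qed.

Lemma walk_shift g n j : walk g n -> walk (fun i => g (j + i)) (n - j).
Proof. by move=> Wg i lt_i; rewrite addnS; apply: Wg; lia. Qed.

Lemma walk_rev g n : symmetric e -> walk g n -> walk (fun i => g (n - i)) n.
Proof.
move=> e_sym Wg i lt_in; rewrite e_sym (_ : n - i = (n - i.+1).+1); last by lia.
by apply: Wg; lia.
Qed.

Lemma walk_between_rev x y n f : symmetric e ->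
  walk_between x y n f -> walk_between y x n (fun i => f (n - i)).
Proof. by move=> e_sym [f0 fn Wf]; split; rewrite ?subn0 ?subnn //; apply: walk_rev. Qed.

Definition splice (g : nat -> T) n (h : nat -> T) i := if i <= n then g i else h i.

Lemma walk_splice g n h m : walk g n -> e (g n) (h n.+1) ->
  (forall i, n < i < m -> e (h i) (h i.+1)) -> walk (splice g n h) m.
Proof.
move=> Wg gh Wh i lt_im; rewrite /splice.
by case: (ltngtP i n) => [lt_in|lt_ni|->] //; [apply: Wg | apply: Wh; rewrite lt_ni].
Qed.

Lemma walk_snoc g n w : walk g n -> e (g n) w -> walk (splice g n (fun _ => w)) n.+1.
Proof. by move=> Wg gw; apply: walk_splice => // i; lia. Qed.

Definition reach (P : T -> Prop) x k v := exists g n,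
  [/\ g 0 = x, g n = v, n <= k, walk g n & forall i, i <= n -> P (g i)].

Lemma reach_sub (P Q : T -> Prop) x k v :
  (forall w, P w -> Q w) -> reach P x k v -> reach Q x k v.
Proof. by move=> PQ [g [n [g0 gn le_nk Wg Pg]]]; exists g, n; split=> // i /Pg /PQ. Qed.

Section Reach.
Variable P : T -> Prop.

Lemma reach_refl x k : P x -> reach P x k x.
Proof. by move=> Px; exists (fun _ => x), 0; split=> // i; rewrite ?ltn0 // leqn0 => /eqP->. Qed.

Lemma reach_last x k v : reach P x k v -> P v.
Proof. by case=> g [n [_ <- _ _ Pg]]; apply: Pg. Qed.

Lemma reach0 x v : reach P x 0 v -> v = x.
Proof. by case=> g [n [g0 gn]]; rewrite leqn0 => /eqP n0; rewrite -gn n0. Qed.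

Lemma reach_mono x k k' v : k <= k' -> reach P x k v -> reach P x k' v.
Proof.
by move=> le_kk' [g [n [g0 gn le_nk Wg Pg]]]; exists g, n; split=> //; apply: leq_trans le_kk'.
Qed.

Lemma reach_prefix g n i : walk g n -> (forall j, j <= n -> P (g j)) ->
  i <= n -> reach P (g 0) i (g i).
Proof.
move=> Wg Pg le_in; exists g, i; split=> //; first exact: walkW Wg.
by move=> j le_ji; apply: Pg (leq_trans le_ji le_in).
Qed.

Lemma reach_snoc x k u w : reach P x k u -> e u w -> P w -> reach P x k.+1 w.
Proof.
case=> g [n [g0 gn le_nk Wg Pg]] euw Pw.
exists (splice g n (fun _ => w)), n.+1; split; rewrite /splice ?ltnn //.
  by apply: walk_snoc => //; rewrite gn.
by move=> i; case: ifP => // le_in _; apply: Pg.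
Qed.

Lemma reach_predecessor x k v : reach P x k.+1 v ->
  reach P x k v \/ exists u, [/\ reach P x k u, e u v & P v].
Proof.
case=> g [n [g0 gn le_nk Wg Pg]].
case: (ltngtP n k.+1) => [lt_nk|lt_kn|n_eq]; [by left; exists g, n | lia | subst n].
right; exists (g k); rewrite -gn -g0.
by split; [exact: reach_prefix Wg Pg (leqnSn k) | exact: Wg | exact: Pg].
Qed.

Lemma reach_cat x y z k k' : reach P x k y -> reach P y k' z -> reach P x (k + k') z.
Proof.
move=> rxy; elim: k' z => [|k' IH] z; first by move/reach0 ->; rewrite addn0.
case/reach_predecessor => [/IH | [u [/IH rxu euz Pz]]].
  by apply: reach_mono; rewrite addnS.
by rewrite addnS; exact: reach_snoc rxu euz Pz.
Qed.

Lemma reach_strict x k v :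
  reach P x k v -> reach (fun z => z = v \/ exists2 i, i < k & reach P x i z) x k v.
Proof.
case=> g [n [g0 gn le_nk Wg Pg]]; exists g, n; split=> // i.
rewrite leq_eqVlt => /predU1P[-> | lt_in]; first by left.
by right; exists i; [apply: leq_trans le_nk | rewrite -g0; apply: reach_prefix Wg Pg (ltnW lt_in)].
Qed.

Lemma reach_self x k v : reach P x k v -> reach (reach P x k) x k v.
Proof.
move=> rv; move/reach_strict: (rv); apply: reach_sub => w [-> // | [i lt_ik rw]].
exact: reach_mono (ltnW lt_ik) rw.
Qed.

End Reach.

Lemma reach_sym (P : T -> Prop) x y k : symmetric e -> reach P x k y -> reach P y k x.
Proof.
move=> e_sym [g [n [g0 gn le_nk Wg Pg]]]; exists (fun i => g (n - i)), n.
by rewrite subn0 subnn; split=> //; [apply: walk_rev | move=> i _; apply: Pg; apply: leq_subr].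
Qed.

End Walks.

Section SeqWalks.
Variables (T : eqType) (e : rel T).

Definition seq_of (g : nat -> T) n := [seq g i | i <- iota 1 n].

Lemma size_seq_of g n : size (seq_of g n) = n.
Proof. by rewrite size_map size_iota. Qed.

Lemma nth_seq_of g n i : i <= n -> nth (g 0) (g 0 :: seq_of g n) i = g i.
Proof. by case: i => [|i] //= le_in; rewrite (nth_map 0) ?size_iota ?nth_iota. Qed.

Lemma last_seq_of g n : last (g 0) (seq_of g n) = g n.
Proof. by rewrite (last_nth (g 0)) size_seq_of nth_seq_of. Qed.

Lemma path_seq_of g n : walk e g n -> path e (g 0) (seq_of g n).
Proof.
move=> Wg; apply/(pathP (g 0)) => i; rewrite size_seq_of => lt_in.
by rewrite -[nth _ (seq_of g n) i]/(nth (g 0) (g 0 :: seq_of g n) i.+1) !nth_seq_of ?Wg // ltnW.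
Qed.

Lemma walk_nth x q : path e x q -> walk e (nth x (x :: q)) (size q).
Proof. by move/(pathP x) => Wq i /Wq. Qed.

Lemma reach_inE (P : pred T) x k v : reach_in e P x k v <-> reach e P x k v.
Proof.
split=> [[q [pq lq le_qk Pq]] | [g [n [<- <- le_nk Wg Pg]]]].
  exists (nth x (x :: q)), (size q); split=> //; first by rewrite -lq (last_nth x).
    exact: walk_nth.
  by move=> i le_iq; apply: (all_nthP x Pq).
exists (seq_of g n); split; rewrite ?last_seq_of ?size_seq_of //; first exact: path_seq_of.
by apply/(all_nthP (g 0)) => i; rewrite /= size_seq_of ltnS => le_in; rewrite nth_seq_of ?Pg.
Qed.

End SeqWalks.

Section FiniteOrder.
Variables (disp : Order.disp_t) (T : finOrderType disp).

Lemma ex_minP (P : T -> Prop) x : P x -> exists2 m, P m & forall y, P y -> (m <= y)%O.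
Proof.
move=> Px; suff [m Pm minm] : exists2 m, P m & forall y, y \in enum T -> P y -> (m <= y)%O.
  by exists m => // y; apply: minm; rewrite mem_enum.
elim: (enum T) => [|a l [m Pm minm]]; first by exists x.
case: (classic (P a /\ (a < m)%O)) => [[Pa lt_am] | not_am].
  exists a => // y; rewrite inE => /predU1P[-> // | yl Py].
  exact: le_trans (ltW lt_am) (minm y yl Py).
exists m => // y; rewrite inE => /predU1P[-> Pa | /minm//].
by rewrite leNgt; apply/negP => lt_am; apply: not_am.
Qed.

End FiniteOrder.

Lemma ex_maxP (disp : Order.disp_t) (T : finOrderType disp) (P : T -> Prop) x :
  P x -> exists2 m, P m & forall y, P y -> (y <= m)%O.
Proof. exact: (@ex_minP _ T^d). Qed.

Section ExtremeIndex.
Variables (disp : Order.disp_t) (T : orderType disp).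
Implicit Types (f : nat -> T).

Definition max_at n f R := R <= n /\ forall i, i <= n -> (f i <= f R)%O.
Definition min_at n f L := L <= n /\ forall i, i <= n -> (f L <= f i)%O.

Lemma ex_max_at n f : exists R, max_at n f R.
Proof.
elim: n => [|n [R [le_Rn fR]]]; first by exists 0; split=> // i; rewrite leqn0 => /eqP->.
case: (leP (f n.+1) (f R)) => [le_fR | lt_fR].
  by exists R; split=> [|i]; [exact: leqW | rewrite leq_eqVlt => /predU1P[-> | /fR]].
exists n.+1; split=> // i; rewrite leq_eqVlt => /predU1P[-> // | le_in].
exact: le_trans (fR i le_in) (ltW lt_fR).
Qed.

Lemma min_at_rev n f L : min_at n f L -> min_at n (fun i => f (n - i)) (n - L).
Proof.
by move=> [le_Ln fL]; split=> [|i _]; rewrite ?leq_subr // subKn //; apply: fL; apply: leq_subr.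
Qed.

End ExtremeIndex.

Lemma ex_min_at (disp : Order.disp_t) (T : orderType disp) n (f : nat -> T) :
  exists L, min_at n f L.
Proof. exact: (@ex_max_at _ T^d). Qed.

Lemma max_at_rev (disp : Order.disp_t) (T : orderType disp) n (f : nat -> T) R :
  max_at n f R -> max_at n (fun i => f (n - i)) (n - R).
Proof. exact: (@min_at_rev _ T^d). Qed.

Section Crossing.
Variables (disp : Order.disp_t) (T : orderType disp) (e : rel T).
Hypotheses (e_sym : symmetric e) (e_X : X_property e).

Lemma X_across u v x y : (u < x < v)%O -> e u v -> e x y ->
  ((v < y)%O -> e u y) /\ ((y < u)%O -> e v y).
Proof.
move=> /andP[ux xv] euv exy; split=> [vy | yu]; first exact: e_X ux xv vy euv exy.
by rewrite e_sym; apply: e_X yu ux xv _ euv; rewrite e_sym.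
Qed.

Lemma walk_cross g n x y : walk e g n -> (g 0 < x < g n)%O ->
  (forall i, i <= n -> g i != x) -> e x y ->
  ((forall i, i <= n -> g i < y)%O -> exists2 i, i <= n & (g i < x)%O && e (g i) y) /\
  ((forall i, i <= n -> y < g i)%O -> exists2 i, i <= n & (x < g i)%O && e (g i) y).
Proof.
move=> Wg /andP[g0x xgn] gx exy.
have [i [_ lt_in gix]] := @nat_ivt (fun i => g i < x)%O 0 n (leq0n n) g0x (negbT (lt_gtF xgn)).
rewrite -leNgt le_eqVlt eq_sym (negbTE (gx _ lt_in)) /= => xgi.
have uxv : (g i < x < g i.+1)%O by rewrite gix.
have [up down] := X_across uxv (Wg i lt_in) exy.
split=> H; [exists i; first exact: ltnW | exists i.+1 => //].
  by rewrite gix up ?H.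
by rewrite xgi down //; apply: H; exact: ltnW.
Qed.

Lemma hull_cross (V : T -> Prop) c ka kb a b x y :
  reach e V c ka a -> reach e V c kb b -> (forall z, V z -> a <= z <= b)%O ->
  ~ V x -> (a < x < b)%O -> e x y ->
  ((b < y)%O -> exists z, [/\ V z, (z < x)%O & e z y]) /\
  ((y < a)%O -> exists z, [/\ V z, (x < z)%O & e z y]).
Proof.
move=> [gA [nA [gA0 gAn _ WA VA]]] [gB [nB [gB0 gBn _ WB VB]]] Vab Vx /andP[ax xb] exy.
have [g [n [Wg gx Vg]]] : exists g n,
    [/\ walk e g n, (g 0 < x < g n)%O & forall i, i <= n -> V (g i)].
  have Vc : V c by rewrite -gA0; apply: VA.
  case: (ltgtP c x) => [cx | xc | cx]; last by rewrite cx in Vc.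
    by exists gB, nB; rewrite gB0 gBn cx xb.
  exists (fun i => gA (nA - i)), nA; rewrite subn0 subnn gA0 gAn ax xc.
  by split=> // [|i _]; [exact: walk_rev | apply: VA; apply: leq_subr].
have gx' i : i <= n -> g i != x by move=> /Vg Vgi; apply/eqP => gix; rewrite gix in Vgi.
have [up down] := walk_cross Wg gx gx' exy.
split=> [yb | ya].
  have below_y i : i <= n -> (g i < y)%O by move/Vg/Vab/andP => [_ /le_lt_trans]; apply.
  by have [i /Vg Vgi /andP[gix giy]] := up below_y; exists (g i).
have above_y i : i <= n -> (y < g i)%O by move/Vg/Vab/andP => [/(lt_le_trans ya)].
by have [i /Vg Vgi /andP[xgi giy]] := down above_y; exists (g i).
Qed.

End Crossing.

Section ExtremalPaths.
Variables (disp : Order.disp_t) (T : finOrderType disp) (e : rel T).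
Hypotheses (e_sym : symmetric e) (e_X : X_property e).
Variables (s t : T) (dd : nat).
Hypothesis s_lt_t : (s < t)%O.
Hypothesis dist_st : forall k, reach e (fun _ => True) s k t -> dd <= k.

Local Notation dist_le := (reach e (fun _ => True) s).
Local Notation reach_s := (reach e (fun w => w <= t)%O s).
Local Notation alpha := (is_alpha_s e s t).
Local Notation beta := (is_beta_s e s t).
Local Notation extremal k v := (alpha k v \/ beta k v).
Local Notation shortest := (walk_between e s t dd).

Definition extremal_before (f : nat -> T) m := forall i, i < m -> extremal i (f i).

Definition out_hull k v := forall a b, alpha k a -> beta k b -> (v < a)%O \/ (b < v)%O.

Lemma reach_s_refl k : reach_s k s.
Proof. by apply: reach_refl; apply: ltW. Qed.

Lemma reach_s_dist k v : reach_s k v -> dist_le k v.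
Proof. exact: reach_sub. Qed.

Lemma dist_snoc k u v : dist_le k u -> e u v -> dist_le k.+1 v.
Proof. by move=> du euv; apply: reach_snoc du euv _. Qed.

Lemma alpha_reach k a : alpha k a -> reach_s k a.
Proof. by case=> /reach_inE. Qed.

Lemma alpha_le k a w : alpha k a -> reach_s k w -> (a <= w)%O.
Proof. by case=> _ amin /reach_inE /amin. Qed.

Lemma beta_reach k b : beta k b -> reach_s k b.
Proof. by case=> /reach_inE. Qed.

Lemma beta_ge k b w : beta k b -> reach_s k w -> (w <= b)%O.
Proof. by case=> _ bmax /reach_inE /bmax. Qed.

Lemma extremal_reach k v : extremal k v -> reach_s k v.
Proof. by case=> [/alpha_reach | /beta_reach]. Qed.

Lemma ex_alpha k : exists a, alpha k a.
Proof.
have [a ra amin] := ex_minP (reach_s_refl k).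
by exists a; split=> [|w /reach_inE /amin //]; apply/reach_inE.
Qed.

Lemma ex_beta k : exists b, beta k b.
Proof.
have [b rb bmax] := ex_maxP (reach_s_refl k).
by exists b; split=> [|w /reach_inE /bmax //]; apply/reach_inE.
Qed.

Lemma alpha0 : alpha 0 s.
Proof.
split; first by apply/reach_inE; exact: reach_s_refl.
by move=> w /reach_inE rw; rewrite (reach0 rw).
Qed.

Lemma sp_far f m i : shortest f -> m < i -> i <= dd -> ~ dist_le m (f i).
Proof.
move=> [f0 fdd Wf] lt_mi le_id dmi.
have rit : reach e (fun _ => True) (f i) (dd - i) t.
  have := reach_prefix (P := fun _ => True) (walk_shift (j := i) Wf) (fun _ _ => I) (leqnn _).
  by rewrite addn0 subnKC // fdd.
by have := dist_st (reach_cat dmi rit); lia.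
Qed.

Lemma sp_dist_le f i : shortest f -> i <= dd -> dist_le i (f i).
Proof. by case=> f0 _ Wf le_id; rewrite -f0; apply: reach_prefix Wf _ le_id. Qed.

Lemma sp_neq f i j : shortest f -> i < j -> j <= dd -> f i != f j.
Proof.
move=> Sf lt_ij le_jd; apply/eqP => fij; apply: (sp_far Sf lt_ij le_jd).
by rewrite -fij; apply: sp_dist_le Sf (ltnW (leq_trans lt_ij le_jd)).
Qed.

Lemma hull_escape k a b x y : alpha k a -> beta k b -> (a <= x <= b)%O -> e x y ->
  (y < a)%O \/ (b < y)%O -> ~ dist_le k y -> e y a \/ e y b.
Proof.
move=> Ha Hb axb exy yab far_y.
(* [V] holds every vertex of the walks from s to [a] and [b]; only their ends can be
   adjacent to the far vertex [y]. *)
pose V z := z = a \/ z = b \/ exists2 i, i < k & reach_s i z.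
have V_adj z : V z -> e z y -> e y a \/ e y b.
  case=> [-> | [-> | [i lt_ik riz]]] ezy; rewrite ?(e_sym y); [by left | by right | ].
  by case: far_y; apply: reach_mono lt_ik (dist_snoc (reach_s_dist riz) ezy).
have V_hull z : V z -> (a <= z <= b)%O.
  have le_ab := alpha_le Ha (beta_reach Hb).
  case=> [-> | [-> | [i lt_ik /(reach_mono (ltnW lt_ik)) rz]]]; rewrite ?lexx ?le_ab //.
  by rewrite (alpha_le Ha rz) (beta_ge Hb rz).
have rV v : reach_s k v -> v = a \/ v = b -> reach e V s k v.
  move=> rv vab; apply: reach_sub (reach_strict rv) => z [-> | rz]; last by right; right.
  by case: vab => ->; [left | right; left].
case: (classic (V x)) => [Vx | nVx]; first exact: V_adj Vx exy.
have axb' : (a < x < b)%O.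
  case/andP: axb => ax xb; rewrite !lt_neqAle ax xb !andbT.
  by apply/andP; split; apply/eqP => xab; apply: nVx; [left | right; left].
have [up down] := hull_cross e_sym e_X (rV a (alpha_reach Ha) (or_introl erefl))
  (rV b (beta_reach Hb) (or_intror erefl)) V_hull nVx axb' exy.
by case: yab => [/down | /up] [z [Vz _ ezy]]; apply: V_adj Vz ezy.
Qed.

Lemma sp_out_hull f k j a b : shortest f -> k < j -> j <= dd -> alpha k a -> beta k b ->
  (f j < a)%O \/ (b < f j)%O.
Proof.
move=> Sf lt_kj le_jd Ha Hb; have [_ fdd Wf] := Sf.
have [in_j | ] := boolP (a <= f j <= b)%O; last by rewrite negb_and -!ltNge => /orP.
exfalso; have out_dd : ~~ (a <= f dd <= b)%O.
  rewrite fdd negb_and -!ltNge orbC lt_neqAle (reach_last (beta_reach Hb)) andbT.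
  apply/orP; left; apply/eqP => bt; apply: (sp_far Sf (leq_trans lt_kj le_jd) (leqnn dd)).
  by rewrite fdd -bt; apply/reach_s_dist/beta_reach.
have [i [le_ji lt_id in_i]] := @nat_ivt (fun i => a <= f i <= b)%O j dd le_jd in_j out_dd.
rewrite negb_and -!ltNge => /orP yab.
have lt_k1i : k.+1 < i.+1 := leq_trans lt_kj le_ji.
have [eya | eyb] := hull_escape Ha Hb in_i (Wf i lt_id) yab (sp_far Sf (ltnW lt_k1i) lt_id).
  by apply: (sp_far Sf lt_k1i lt_id (dist_snoc (reach_s_dist (alpha_reach Ha)) _)); rewrite e_sym.
by apply: (sp_far Sf lt_k1i lt_id (dist_snoc (reach_s_dist (beta_reach Hb)) _)); rewrite e_sym.
Qed.

Lemma hull_neighbor k v u : ~ dist_le k v -> out_hull k v -> reach_s k u -> e v u ->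
  exists2 E, extremal k E & e v E.
Proof.
move=> far_v out_v ru evu; have [a Ha] := ex_alpha k; have [b Hb] := ex_beta k.
have aub : (a <= u <= b)%O by rewrite (alpha_le Ha ru) (beta_ge Hb ru).
rewrite e_sym in evu.
by case: (hull_escape Ha Hb aub evu (out_v a b Ha Hb) far_v) => [eva | evb];
  [exists a; first left | exists b; first right].
Qed.

Lemma extremal_far_out k E : extremal k.+1 E -> ~ dist_le k E -> out_hull k E.
Proof.
move=> HE far_E a b Ha Hb.
have neE w : reach_s k w -> w != E.
  by move=> rw; apply/eqP => wE; apply: far_E; rewrite -wE; apply: reach_s_dist.
case: HE => HE; [left | right]; rewrite lt_neqAle.
  have ra := alpha_reach Ha.
  by rewrite eq_sym neE // (alpha_le HE (reach_mono (leqnSn k) ra)).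
have rb := beta_reach Hb.
by rewrite neE // (beta_ge HE (reach_mono (leqnSn k) rb)).
Qed.

Lemma extremal_pred k E : extremal k.+1 E -> ~ dist_le k E -> exists2 u, reach_s k u & e E u.
Proof.
move=> HE far_E.
have [/reach_s_dist // | [u [ru euE _]]] := reach_predecessor (extremal_reach HE).
by exists u; rewrite // e_sym.
Qed.

Lemma extremal_walk n v : ~ dist_le n v -> out_hull n v -> (exists2 u, reach_s n u & e v u) ->
  exists g, [/\ g 0 = s, g n.+1 = v, walk e g n.+1 & extremal_before g n.+1].
Proof.
elim: n v => [|n IH] v far_v out_v [u ru evu].
  have [E HE evE] := hull_neighbor far_v out_v ru evu.
  have Es : E = s by apply: reach0 (extremal_reach HE).
  exists (splice (fun _ => s) 0 (fun _ => v)); split=> //.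
    by apply: walk_snoc => //; rewrite e_sym -Es.
  by move=> i; rewrite ltnS leqn0 => /eqP->; left; exact: alpha0.
have [E HE evE] := hull_neighbor far_v out_v ru evu.
have far_E : ~ dist_le n E by move=> dE; apply: far_v; apply: dist_snoc dE _; rewrite e_sym.
have [g [g0 gE Wg ext_g]] := IH E far_E (extremal_far_out HE far_E) (extremal_pred HE far_E).
exists (splice g n.+1 (fun _ => v)); split; rewrite /splice ?ltnn //.
  by apply: walk_snoc => //; rewrite gE e_sym.
move=> i; rewrite ltnS => le_i; rewrite le_i.
by move: le_i; rewrite leq_eqVlt => /predU1P[-> | /ext_g //]; rewrite gE.
Qed.

Lemma sp_tail_reenters f R j A : shortest f -> max_at dd f R -> j.+1 < R ->
  reach_s j A -> (A < t)%O -> (t < f j.+1)%O ->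
  exists i, [/\ R <= i, i < dd, (f i < A)%O \/ (f j.+1 < f i)%O & (A < f i.+1 < f j.+1)%O].
Proof.
move=> Sf [le_Rd fR] lt_JR rA lt_At lt_tJ; have [_ fdd _] := Sf.
have lt_JR' : (f j.+1 < f R)%O.
  by rewrite lt_neqAle (sp_neq Sf lt_JR le_Rd) fR // ltnW // (leq_trans lt_JR le_Rd).
have out_R : ~~ (A < f R < f j.+1)%O by rewrite negb_and -!leNgt (ltW lt_JR') orbT.
have in_dd : ~~ ~~ (A < f dd < f j.+1)%O by rewrite negbK fdd lt_At.
have [i [le_Ri lt_id out_i]] := @nat_ivt (fun i => ~~ (A < f i < f j.+1))%O R dd le_Rd out_R in_dd.
rewrite negbK => in_x; exists i; split=> //.
have lt_Ji : j.+1 < i := leq_trans lt_JR le_Ri.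
have yA : f i != A.
  by apply/eqP => yA; apply: (sp_far Sf (ltnW lt_Ji) (ltnW lt_id)); rewrite yA; apply: reach_s_dist.
have Jy : f j.+1 != f i := sp_neq Sf lt_Ji (ltnW lt_id).
by move: out_i; rewrite negb_and -!leNgt !le_eqVlt (negbTE yA) (negbTE Jy) => /orP.
Qed.

Lemma sp_reach_s_step f R j : shortest f -> max_at dd f R -> j.+1 < R ->
  reach_s j (f j) -> (f j.+1 <= t)%O.
Proof.
move=> Sf HR lt_JR rfj; have [f0 fdd Wf] := Sf; have [le_Rd fR] := HR.
have lt_Jd : j.+1 < dd := leq_trans lt_JR le_Rd.
rewrite leNgt; apply/negP => lt_tJ.
have [A HA] := ex_alpha j; have rA := alpha_reach HA.
have lt_At : (A < t)%O.
  rewrite lt_neqAle (reach_last rA) andbT; apply/eqP => At.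
  by apply: (sp_far Sf (ltnW lt_Jd) (leqnn dd)); rewrite fdd -At; apply: reach_s_dist.
have [i [le_Ri lt_id y_out in_x]] := sp_tail_reenters Sf HR lt_JR rA lt_At lt_tJ.
have lt_Ji : j.+1 < i := leq_trans lt_JR le_Ri.
(* Walks from s inside [V] span [A, f j.+1]; as the edge f i -- f i.+1 enters this interval,
   the X-property makes f i adjacent to [V], which its distance from s forbids. *)
pose V z := reach_s j z \/ z = f j.+1.
have V_hull z : V z -> (A <= z <= f j.+1)%O.
  case=> [rz | ->]; first by rewrite (alpha_le HA rz) (le_trans (reach_last rz) (ltW lt_tJ)).
  by rewrite lexx andbT (le_trans (ltW lt_At) (ltW lt_tJ)).
have rVA : reach e V s j A by apply: reach_sub (reach_self rA) => z; left.
have rVJ : reach e V s j.+1 (f j.+1).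
  apply: reach_snoc (Wf j (ltnW lt_Jd)) _; last by right.
  by apply: reach_sub (reach_self rfj) => z; left.
have Vx : ~ V (f i.+1).
  case=> [/reach_s_dist | xJ]; first exact: sp_far Sf (leqW (ltnW lt_Ji)) lt_id.
  by have := sp_neq Sf (leqW lt_Ji) lt_id; rewrite xJ eqxx.
have exy : e (f i.+1) (f i) by rewrite e_sym; apply: Wf.
have [up down] := hull_cross e_sym e_X rVA rVJ V_hull Vx in_x exy.
have near_y z : reach_s j z -> ~ e z (f i).
  by move=> rz ezy; apply: (sp_far Sf lt_Ji (ltnW lt_id)); exact: dist_snoc (reach_s_dist rz) ezy.
case: y_out => [yA | Jy].
  have [z [[rz | ->] _ ezy]] := down yA; first by case: (near_y z rz ezy).
  have le_ij2 : i <= j.+2.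
    rewrite leqNgt; apply/negP => lt_i; apply: (sp_far Sf lt_i (ltnW lt_id)).
    exact: dist_snoc (sp_dist_le Sf (ltnW lt_Jd)) ezy.
  have iR : i = R by apply/eqP; rewrite eqn_leq le_Ri andbT (leq_trans le_ij2 lt_JR).
  by move: yA; rewrite iR => /lt_trans/(_ lt_At); rewrite ltNge -fdd fR.
have [z [[rz | ->] xz ezy]] := up Jy; first by case: (near_y z rz ezy).
by move: (lt_trans xz (proj2 (andP in_x))); rewrite ltxx.
Qed.

Lemma sp_reach_s f R j k : shortest f -> max_at dd f R -> j <= k -> k < R -> reach_s k (f j).
Proof.
move=> Sf HR le_jk lt_kR; have [f0 _ Wf] := Sf; apply: (reach_mono le_jk).
elim: j le_jk => [|j IH] lt_jk; first by rewrite f0; apply: reach_s_refl.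
have lt_JR : j.+1 < R := leq_ltn_trans lt_jk lt_kR.
have rfj := IH (ltnW lt_jk).
apply: reach_snoc rfj (Wf j (ltnW (leq_trans lt_JR HR.1))) (sp_reach_s_step Sf HR lt_JR rfj).
Qed.

Lemma sp_min_lt_alpha f L k a : shortest f -> min_at dd f L -> k < L -> alpha k a -> (f L < a)%O.
Proof.
move=> Sf [le_Ld fL] lt_kL Ha; have [f0 _ _] := Sf; have [b Hb] := ex_beta k.
have [// | lt_bfL] := sp_out_hull Sf lt_kL le_Ld Ha Hb.
have := fL 0 (leq0n dd); rewrite f0 => le_fLs.
by have := le_trans le_fLs (beta_ge Hb (reach_s_refl k)); rewrite leNgt lt_bfL.
Qed.

Lemma sp_above_beta f L R m b : shortest f -> min_at dd f L -> max_at dd f R ->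
  L <= m -> m < R -> beta m b -> (b < f m.+1)%O.
Proof.
move=> Sf [_ fL] HR le_Lm lt_mR Hb; have le_md : m < dd := leq_trans lt_mR HR.1.
have [a Ha] := ex_alpha m.
have [lt_fa | //] := sp_out_hull Sf (ltnSn m) le_md Ha Hb.
have := le_trans (alpha_le Ha (sp_reach_s Sf HR le_Lm lt_mR)) (fL _ le_md).
by rewrite leNgt lt_fa.
Qed.

Lemma sp_interior_beta f L R i : shortest f -> min_at dd f L -> max_at dd f R ->
  L < i -> i < R -> beta i (f i).
Proof.
move=> Sf HL HR lt_Li lt_iR; have [_ _ Wf] := Sf.
have [b Hb] := ex_beta i.
suff le_bf : (b <= f i)%O.
  split=> [|w /reach_inE rw]; first exact/reach_inE/(sp_reach_s Sf HR (leqnn i) lt_iR).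
  exact: le_trans (beta_ge Hb rw) le_bf.
(* Otherwise the predecessor u of b on a walk gives u <= beta_s(k) < f k.+1 < b < f k.+2,
   and the X-property yields the shortcut u -- f k.+2. *)
case: i lt_Li lt_iR Hb => [// | k] lt_Lk lt_kR Hb.
rewrite leNgt; apply/negP => lt_fb.
have [b0 Hb0] := ex_beta k.
have lt_b0f := sp_above_beta Sf HL HR lt_Lk (ltnW lt_kR) Hb0.
have lt_bf := sp_above_beta Sf HL HR (ltnW lt_Lk) lt_kR Hb.
have [rb | [u [ru eub _]]] := reach_predecessor (beta_reach Hb).
  by have := lt_trans (le_lt_trans (beta_ge Hb0 rb) lt_b0f) lt_fb; rewrite ltxx.
have lt_uf : (u < f k.+1)%O := le_lt_trans (beta_ge Hb0 ru) lt_b0f.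
have le_kd : k.+1 < dd := leq_trans lt_kR HR.1.
have euf : e u (f k.+2) := e_X lt_uf lt_fb lt_bf eub (Wf _ le_kd).
exact: sp_far Sf (ltnSn k.+1) le_kd (dist_snoc (reach_s_dist ru) euf).
Qed.

Lemma sp_min_alpha f l R a : shortest f -> min_at dd f l.+1 -> max_at dd f R -> l.+1 < R ->
  alpha l.+1 a -> [/\ e a (f l.+2), ~ dist_le l a, out_hull l a & exists2 u, reach_s l u & e a u].
Proof.
move=> Sf HL HR lt_LR Ha; have [_ _ Wf] := Sf.
have lt_Ld : l.+1 < dd := leq_trans lt_LR HR.1.
have [a' Ha'] := ex_alpha l.
have lt_fa' := sp_min_lt_alpha Sf HL (ltnSn l) Ha'.
have le_af : (a <= f l.+1)%O := alpha_le Ha (sp_reach_s Sf HR (leqnn _) lt_LR).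
have [u ru eua] : exists2 u, reach_s l u & e u a.
  have [ra | [u [ru eua _]]] := reach_predecessor (alpha_reach Ha); last by exists u.
  by have := le_lt_trans (alpha_le Ha' ra) (le_lt_trans le_af lt_fa'); rewrite ltxx.
have eaf : e a (f l.+2).
  have [bL HbL] := ex_beta l.+1.
  have lt_bf := sp_above_beta Sf HL HR (leqnn _) lt_LR HbL.
  have lt_fu : (f l.+1 < u)%O := lt_le_trans lt_fa' (alpha_le Ha' ru).
  have le_ub : (u <= bL)%O := beta_ge HbL (reach_mono (leqnSn l) ru).
  have [-> | ne_af] := eqVneq a (f l.+1); first exact: Wf.
  have lt_af : (a < f l.+1)%O by rewrite lt_neqAle ne_af le_af.
  by apply: e_X lt_af lt_fu (le_lt_trans le_ub lt_bf) _ (Wf _ lt_Ld); rewrite e_sym.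
split=> //; last by exists u; rewrite // e_sym.
  by move=> da; apply: sp_far Sf (ltnSn l.+1) lt_Ld (dist_snoc da eaf).
by move=> a'' b'' Ha'' _; left; apply: le_lt_trans le_af (sp_min_lt_alpha Sf HL (ltnSn l) Ha'').
Qed.

Lemma sp_extremal_before_max f L R : shortest f -> min_at dd f L -> max_at dd f R -> R < L ->
  exists f1, [/\ shortest f1, min_at dd f1 L, max_at dd f1 R, extremal_before f1 R
    & forall i, R <= i -> f1 i = f i].
Proof.
move=> Sf HL HR lt_RL; have [f0 fdd Wf] := Sf; have [le_Ld fL] := HL; have [le_Rd fR] := HR.
case: R lt_RL HR le_Rd fR => [|r] lt_RL HR le_Rd fR.
  by have := fR dd (leqnn dd); rewrite f0 fdd leNgt s_lt_t.
have efr : e (f r.+1) (f r) by rewrite e_sym; apply: Wf.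
have [g [g0 gR Wg ext_g]] := extremal_walk (sp_far Sf (ltnSn r) le_Rd)
  (fun a b => sp_out_hull Sf (ltnSn r) le_Rd)
  (ex_intro2 _ _ (f r) (sp_reach_s Sf HR (leqnn r) (ltnSn r)) efr).
have rg i : i <= r -> reach_s r (g i).
  by move=> le_ir; apply: reach_mono le_ir (extremal_reach (ext_g i le_ir)).
have [a Ha] := ex_alpha r.
exists (splice g r f); split.
- split; [by rewrite /splice leq0n | by rewrite /splice leqNgt le_Rd | ].
  apply: walk_splice (walkW (leqnSn r) Wg) _ _ => [|i /andP[_ /Wf //]].
  by rewrite -gR; apply: Wg.
- split=> // i le_id; rewrite /splice (leqNgt L) (ltnW lt_RL) /=.
  case: leqP => [le_ir | _]; last exact: fL.
  exact: ltW (lt_le_trans (sp_min_lt_alpha Sf HL (ltnW lt_RL) Ha) (alpha_le Ha (rg i le_ir))).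
- split=> // i le_id; rewrite /splice ltnn; case: leqP => [le_ir | _]; last exact: fR.
  by apply: le_trans (reach_last (rg i le_ir)) _; rewrite -fdd fR.
- by move=> i; rewrite ltnS => le_ir; rewrite /splice le_ir; apply: ext_g.
- by move=> i lt_ri; rewrite /splice leqNgt lt_ri.
Qed.

Lemma sp_extremal_through_min f L R : shortest f -> min_at dd f L -> max_at dd f R -> L < R ->
  exists f1, [/\ shortest f1, min_at dd f1 L, max_at dd f1 R, extremal_before f1 L.+1
    & forall i, L < i -> f1 i = f i].
Proof.
move=> Sf HL HR lt_LR; have [f0 fdd Wf] := Sf; have [le_Ld fL] := HL; have [le_Rd fR] := HR.
case: L lt_LR HL le_Ld fL => [|l] lt_LR HL le_Ld fL.
  by exists f; split=> // i; rewrite ltnS leqn0 => /eqP->; left; rewrite f0; apply: alpha0.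
have lt_Ld : l.+1 < dd := leq_trans lt_LR le_Rd.
have [a Ha] := ex_alpha l.+1.
have [eaf far_a out_a nbr_a] := sp_min_alpha Sf HL HR lt_LR Ha.
have [g [g0 ga Wg ext_g]] := extremal_walk far_a out_a nbr_a.
have rg i : i <= l.+1 -> reach_s i (g i).
  by rewrite leq_eqVlt => /predU1P[-> | /ext_g /extremal_reach //]; rewrite ga; apply: alpha_reach.
have [a' Ha'] := ex_alpha l.
have lt_aa' : (a < a')%O.
  apply: le_lt_trans (alpha_le Ha (sp_reach_s Sf HR (leqnn _) lt_LR)) _.
  exact: sp_min_lt_alpha Sf HL (ltnSn l) Ha'.
exists (splice g l.+1 f); split.
- split; [by rewrite /splice leq0n | by rewrite /splice leqNgt lt_Ld | ].
  by apply: walk_splice Wg _ _ => [|i /andP[_ /Wf //]]; rewrite ga.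
- split=> // i le_id; rewrite /splice leqnn ga; case: leqP => [le_iL | lt_Li] /=.
    move: le_iL; rewrite leq_eqVlt => /predU1P[-> | ]; first by rewrite ga.
    rewrite ltnS => le_il.
    exact: ltW (lt_le_trans lt_aa' (alpha_le Ha' (reach_mono le_il (rg i (leqW le_il))))).
  exact: le_trans (alpha_le Ha (sp_reach_s Sf HR (leqnn _) lt_LR)) (fL i le_id).
- split=> // i le_id; rewrite /splice (leqNgt R) lt_LR /=.
  case: leqP => [le_iL | _]; last exact: fR.
  by apply: le_trans (reach_last (rg i le_iL)) _; rewrite -fdd fR.
- move=> i; rewrite ltnS => le_iL; rewrite /splice le_iL.
  by move: le_iL; rewrite leq_eqVlt => /predU1P[-> | /ext_g //]; rewrite ga; left.
- by move=> i lt_Li; rewrite /splice leqNgt lt_Li.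
Qed.

Lemma sp_extremal_prefix f L R : shortest f -> min_at dd f L -> max_at dd f R ->
  exists f1, [/\ shortest f1, min_at dd f1 L, max_at dd f1 R, extremal_before f1 R
    & forall i, R <= i -> f1 i = f i].
Proof.
move=> Sf HL HR; case: (ltngtP L R) => [lt_LR | lt_RL | eq_LR]; last 1 first.
- have [f0 fdd _] := Sf; have := HL.2 0 (leq0n dd); have := HR.2 dd (leqnn dd).
  rewrite eq_LR f0 fdd => le_tR le_Rs.
  by have := le_trans le_tR le_Rs; rewrite leNgt s_lt_t.
- have [f1 [S1 HL1 HR1 ext1 agree]] := sp_extremal_through_min Sf HL HR lt_LR.
  exists f1; split=> // [i lt_iR | i le_Ri]; last exact/agree/(leq_trans lt_LR).
  have [le_iL | lt_Li] := leqP i L; first exact: ext1.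
  by right; apply: sp_interior_beta S1 HL1 HR1 lt_Li lt_iR.
- exact: sp_extremal_before_max.
Qed.

End ExtremalPaths.

Lemma X_property_dual (disp : Order.disp_t) (T : orderType disp) (e : rel T) :
  symmetric e -> X_property e -> X_property (T := T^d) e.
Proof.
move=> e_sym e_X p q r s pq qr rs epr eqs.
by rewrite e_sym; apply: e_X rs qr pq _ _; rewrite e_sym.
Qed.

Section BothEnds.
Variables (disp : Order.disp_t) (T : finOrderType disp) (e : rel T).
Hypotheses (e_sym : symmetric e) (e_X : X_property e).
Variables (s t : T) (dd : nat).
Hypothesis s_lt_t : (s < t)%O.
Hypothesis dist_st : forall k, reach e (fun _ => True) s k t -> dd <= k.

Lemma exists_extremal_shortest f : walk_between e s t dd f -> exists f2 R L,
  [/\ walk_between e s t dd f2, max_at dd f2 R, min_at dd f2 L, extremal_before e s t f2 R &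
      forall i, L < i -> i <= dd ->
        is_alpha_t e s t (dd - i) (f2 i) \/ is_beta_t e s t (dd - i) (f2 i)].
Proof.
move=> Sf; have [R HR] := ex_max_at dd f; have [L HL] := ex_min_at dd f.
have [f1 [S1 HL1 HR1 ext1 _]] := sp_extremal_prefix e_sym e_X s_lt_t dist_st Sf HL HR.
(* In the dual order alpha_t and beta_t are alpha_s and beta_s with s and t exchanged. *)
have dist_ts k : reach e (fun _ => True) t k s -> dd <= k by move/(reach_sym e_sym)/dist_st.
have [g [Sg HLg HRg extg agree]] := @sp_extremal_prefix _ T^d e e_sym (X_property_dual e_sym e_X)
  t s dd s_lt_t dist_ts _ (dd - R) (dd - L) (walk_between_rev e_sym S1)
  (max_at_rev HR1) (min_at_rev HL1).
have [le_Rd le_Ld] : R <= dd /\ L <= dd by split; [case: HR1 | case: HL1].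
pose f2 : nat -> T := fun i => g (dd - i).
have S2 : walk_between e s t dd f2 := walk_between_rev e_sym Sg.
have HR2 : max_at dd f2 R.
  by rewrite /f2 -[R in max_at _ _ R](subKn le_Rd); exact: max_at_rev (HLg : max_at (T := T) _ g _).
have HL2 : min_at dd f2 L.
  by rewrite /f2 -[L in min_at _ _ L](subKn le_Ld); exact: min_at_rev (HRg : min_at (T := T) _ g _).
exists f2, R, L; split=> // [i lt_iR | i lt_Li le_id].
  have [le_iL | lt_Li] := leqP i L; last by right; apply: sp_interior_beta S2 HL2 HR2 lt_Li lt_iR.
  rewrite /f2 agree /= ?subKn ?leq_sub2l //; first exact: ext1.
  exact: ltnW (leq_trans lt_iR le_Rd).
by apply: (extg (dd - i)); lia.
Qed.

End BothEnds.

Section SeqIndex.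
Variables (disp : Order.disp_t) (T : orderType disp) (f : nat -> T) (n : nat).
Hypothesis f_neq : forall i j, i < j -> j <= n -> f i != f j.

Lemma index_seq_of i : i <= n -> index (f i) (f 0 :: seq_of f n) = i.
Proof.
move=> le_in; have uniq_f : uniq (f 0 :: seq_of f n).
  rewrite [_ :: _](_ : _ = [seq f i | i <- iota 0 n.+1]) // map_inj_in_uniq ?iota_uniq // => j k.
  rewrite !mem_iota !add0n !ltnS /= => le_j le_k /eqP.
  case: (ltngtP j k) => [lt_jk | lt_kj | //]; first by rewrite (negbTE (f_neq lt_jk le_k)).
  by rewrite eq_sym (negbTE (f_neq lt_kj le_j)).
by rewrite -{1}(nth_seq_of f le_in) index_uniq //= size_seq_of ltnS.
Qed.

Lemma righti_seq_of R : max_at n f R -> righti (f 0) (seq_of f n) = R.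
Proof.
move=> [le_Rn fR]; rewrite /righti.
suff -> : foldr Order.max (f 0) (seq_of f n) = f R by apply: index_seq_of.
rewrite foldrE big_map; apply/le_anti/andP; split.
  rewrite big_seq; apply: bigmax_le => [|i]; first exact: fR.
  by rewrite mem_iota add1n ltnS => /andP[_ /fR].
case: R le_Rn fR => [|r] le_rn _; first exact: bigmax_ge_id.
by apply: le_bigmax_seq; rewrite // mem_iota add1n ltnS.
Qed.

Lemma lefti_seq_of L : min_at n f L -> lefti (f 0) (seq_of f n) = L.
Proof.
move=> [le_Ln fL]; rewrite /lefti.
suff -> : foldr Order.min (f 0) (seq_of f n) = f L by apply: index_seq_of.
rewrite foldrE big_map; apply/le_anti/andP; split; last first.
  rewrite big_seq; apply: le_bigmin => [|i]; first exact: fL.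
  by rewrite mem_iota add1n ltnS => /andP[_ /fL].
case: L le_Ln fL => [|l] le_ln _; first exact: bigmin_le_id.
by apply: ge_bigmin_seq; rewrite // mem_iota add1n ltnS.
Qed.

End SeqIndex.

Local Open Scope order_scope.

Theorem lemma11 (d : Order.disp_t) (T : finOrderType d) (e : rel T)
  (Hg : simple_graph e) (HX : X_property e) (s t : T) (Hst : s < t)
  (dstar : nat) (Hd : is_dist e s t dstar) :
  exists q : seq T,
    [/\ path e s q, last s q = t, size q = dstar,
        (forall i : nat, (i < righti s q)%N ->
           is_alpha_s e s t i (nth s (s :: q) i) \/
           is_beta_s e s t i (nth s (s :: q) i))
      & (forall i : nat, (lefti s q < i)%N -> (i <= dstar)%N ->
           is_alpha_t e s t (dstar - i) (nth s (s :: q) i) \/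
           is_beta_t e s t (dstar - i) (nth s (s :: q) i))].
Proof.
have e_sym : symmetric e by case: Hg.
have [[q0 [pq0 lq0 sq0]] min_q] := Hd.
have dist_st k : reach e (fun _ => True) s k t -> (dstar <= k)%N.
  case=> g [n [g0 gn le_nk Wg _]]; apply: leq_trans le_nk.
  by rewrite -(size_seq_of g n); apply: min_q; rewrite -g0 ?path_seq_of ?last_seq_of.
have S0 : walk_between e s t dstar (nth s (s :: q0)).
  by split; rewrite -?sq0 -?(last_nth s) //; apply: walk_nth.
have [f [R [L [Sf HR HL ext_s ext_t]]]] := exists_extremal_shortest e_sym HX Hst dist_st S0.
have [f0 fd Wf] := Sf.
have f_neq i j : (i < j)%N -> (j <= dstar)%N -> f i != f j := sp_neq Hst dist_st Sf.
have nthE i : (i <= dstar)%N -> nth s (s :: seq_of f dstar) i = f i.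
  by rewrite -f0; apply: nth_seq_of.
exists (seq_of f dstar); split.
- by rewrite -f0; apply: path_seq_of.
- by rewrite -f0 last_seq_of.
- exact: size_seq_of.
- move=> i; rewrite -f0 (righti_seq_of f_neq HR) f0 => lt_iR.
  by rewrite nthE; [exact: ext_s | exact: ltnW (leq_trans lt_iR HR.1)].
- move=> i; rewrite -f0 (lefti_seq_of f_neq HL) f0 => lt_Li le_id.
  by rewrite nthE //; exact: ext_t.
Qed.
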